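(* Let $w\ge0$ and let $\tilde x:[0,1]\to\mathbb R$ solve $$\tilde x'(s)=(w+1)-w\tanh\bigl(s\,\tilde x(s)\bigr),\qquad \tilde x(0)=x.$$ If $x\ge-\frac{\sqrt{w+1}}{2}$, then $\tilde x(1)\ge\frac{\sqrt{w+1}}{4}$.
   Context: This ODE is the (time-reparametrized, $T\to\infty$ limit of the) guided probability flow ODE with guidance parameter $w$ toward the component $z=+1$ for the Gaussian mixture $\frac12\mathcal N(1,1)+\frac12\mathcal N(-1,1)$; $\tilde x(1)$ is the output sample for initialization $x$. *)

From Stdlib Require Import Reals.
From Coquelicot Require Import Coquelicot.
Open Scope R_scope.

From Stdlib Require Import Reals Lra.
From Coquelicot Require Import Coquelicot.
Open Scope R_scope.

(* Write a := sqrt (w + 1).  The drift is always at least 1, so the solution is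
   increasing; if it ended below a/4 it would stay below a/4 on the whole of
   [0, 1], and then the drift at time s is at least a^2 exp (- s a / 2).
   Integrating, xt 1 - x >= 2a (1 - exp (- a / 2)) >= 3a/4 because a >= 1,
   so xt 1 >= - a/2 + 3a/4 = a/4 after all. *)

Definition guided_drift (w t : R) : R := (w + 1) - w * tanh t.

Lemma one_sub_tanh (t : R) : 1 - tanh t = 2 / (exp (2 * t) + 1).
Proof.
  unfold tanh, sinh, cosh.
  replace (2 * t) with (t + t) by ring.
  rewrite exp_plus; unfold Rminus; rewrite exp_Ropp.
  assert (Hpos := exp_pos t).
  field_simplify; [reflexivity | nra | split; nra].
Qed.

Lemma exp_le_exp (x y : R) : x <= y -> exp x <= exp y.
Proof.
  intros [Hlt | ->]; [now left; apply exp_increasing | now right].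
Qed.

Lemma exp_neg_half_le : exp (- (1 / 2)) <= 5 / 8.
Proof.
  assert (Hq := exp_ineq1 (1 / 8) ltac:(lra)).
  assert (Hhalf : exp (1 / 2) = exp (1 / 8) * exp (1 / 8) * (exp (1 / 8) * exp (1 / 8))).
  { rewrite <- !exp_plus; f_equal; lra. }
  assert (Hge : 8 / 5 <= exp (1 / 2)).
  { rewrite Hhalf; assert (81 / 64 < exp (1 / 8) * exp (1 / 8)) by nra; nra. }
  rewrite exp_Ropp, <- (Rinv_inv (5 / 8)).
  apply Rinv_le_contravar; lra.
Qed.

Lemma guided_drift_ge1 (w t : R) : 0 <= w -> 1 <= guided_drift w t.
Proof.
  intros Hw; unfold guided_drift.
  assert (0 < 1 - tanh t).
  { rewrite one_sub_tanh; apply Rdiv_lt_0_compat; [lra |].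
    assert (Hpos := exp_pos (2 * t)); lra. }
  nra.
Qed.

(* Uses 1 - tanh t = 2 / (exp (2 t) + 1) >= 2 / (2 exp (2 y)) and exp (-2y) <= 1. *)
Lemma guided_drift_ge_exp (w t y : R) :
  0 <= w -> 0 <= y -> t <= y -> (w + 1) * exp (- (2 * y)) <= guided_drift w t.
Proof.
  intros Hw Hy Hty; unfold guided_drift.
  assert (Hty2 : exp (2 * t) <= exp (2 * y)) by (apply exp_le_exp; lra).
  assert (Hy1 : 1 <= exp (2 * y)) by (rewrite <- exp_0; apply exp_le_exp; lra).
  assert (Htpos := exp_pos (2 * t)).
  assert (Hinv_le1 : / exp (2 * y) <= 1).
  { rewrite <- Rinv_1; apply Rinv_le_contravar; lra. }
  assert (Htanh : / exp (2 * y) <= 1 - tanh t).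
  { rewrite one_sub_tanh.
    apply (Rmult_le_reg_r (exp (2 * y))); [lra |].
    rewrite Rinv_l by lra; unfold Rdiv.
    apply (Rmult_le_reg_r (exp (2 * t) + 1)); [lra |].
    field_simplify; lra. }
  rewrite exp_Ropp; nra.
Qed.

Lemma nondecreasing_of_derive_ge0 (f df : R -> R) (a b : R) :
  a <= b ->
  (forall s, a <= s <= b -> continuous f s) ->
  (forall s, a < s < b -> is_derive f s (df s)) ->
  (forall s, a < s < b -> 0 <= df s) ->
  f a <= f b.
Proof.
  intros Hab Hcont Hder Hsign.
  (* MVT_gen may return an endpoint, where nothing is known about df. *)
  set (df_in := fun s => if Rlt_dec a s then if Rlt_dec s b then df s else 0 else 0).
  assert (Hdf_in : forall s, a < s < b -> df_in s = df s).
  { intros s Hs; unfold df_in.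
    destruct (Rlt_dec a s); [| lra]; destruct (Rlt_dec s b); [reflexivity | lra]. }
  assert (Hsign_in : forall s, 0 <= df_in s).
  { intros s; unfold df_in.
    destruct (Rlt_dec a s); [| lra]; destruct (Rlt_dec s b); [| lra].
    apply Hsign; lra. }
  destruct (MVT_gen f a b df_in) as [c [_ Hmvt]];
    rewrite ?Rmin_left, ?Rmax_right by lra.
  - intros s Hs; rewrite Hdf_in by lra; apply Hder; lra.
  - intros s Hs; apply continuity_pt_filterlim, Hcont; lra.
  - specialize (Hsign_in c); nra.
Qed.

Theorem lemma4p2 (w x : R) (xt : R -> R) :
  0 <= w ->
  (forall s, 0 <= s <= 1 -> continuous xt s) ->
  (forall s, 0 < s < 1 -> is_derive xt s ((w + 1) - w * tanh (s * xt s))) ->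
  xt 0 = x ->
  x >= - sqrt (w + 1) / 2 ->
  xt 1 >= sqrt (w + 1) / 4.
Proof.
  intros Hw Hcont Hder H0 Hx.
  set (a := sqrt (w + 1)) in *.
  assert (Ha2 : a * a = w + 1) by (apply sqrt_sqrt; lra).
  assert (Ha1 : 1 <= a) by (rewrite <- sqrt_1; apply sqrt_le_1_alt; lra).
  set (drift := fun s => guided_drift w (s * xt s)).
  destruct (Rle_or_lt (a / 4) (xt 1)) as [Hdone | Hsmall]; [lra |].
  assert (Hbelow : forall s, 0 < s < 1 -> xt s <= a / 4).
  { intros s Hs.
    enough (xt s <= xt 1) by lra.
    apply (nondecreasing_of_derive_ge0 xt drift); [lra | | |].
    - intros u Hu; apply Hcont; lra.
    - intros u Hu; apply Hder; lra.
    - intros u Hu; assert (H1 := guided_drift_ge1 w (u * xt u) Hw); unfold drift; lra. }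
  (* 2a exp (- s a / 2) is minus an antiderivative of the lower bound a^2 exp (- s a / 2). *)
  set (g := fun s => xt s + 2 * a * exp (- (s * a / 2))).
  assert (Hg : g 0 <= g 1).
  { apply (nondecreasing_of_derive_ge0 g (fun s => drift s - (w + 1) * exp (- (s * a / 2))));
      [lra | | |].
    - intros s Hs; apply (continuous_plus xt); [apply Hcont; lra |].
      apply ex_derive_continuous; auto_derive; exact I.
    - intros s Hs; apply (is_derive_plus xt); [apply Hder; lra |].
      rewrite <- Ha2; auto_derive; [exact I | unfold Rdiv; field].
    - intros s Hs.
      assert (Hd := guided_drift_ge_exp w (s * xt s) (s * a / 4) Hw).
      replace (- (2 * (s * a / 4))) with (- (s * a / 2)) in Hd by field.
      assert (Hb := Hbelow s Hs).
      assert (Hdrift : (w + 1) * exp (- (s * a / 2)) <= drift s) by (apply Hd; nra).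
      lra. }
  assert (He : exp (- (a / 2)) <= 5 / 8).
  { eapply Rle_trans; [apply exp_le_exp | apply exp_neg_half_le]; lra. }
  unfold g in Hg.
  replace (- (0 * a / 2)) with 0 in Hg by field.
  replace (- (1 * a / 2)) with (- (a / 2)) in Hg by field.
  rewrite exp_0 in Hg.
  nra.
Qed.
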